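(* Let $G$ be a graph with minimum degree $\delta(G)\ge 2$ and $\mu(G)\le\delta(G)-1$, and let $S,T$ be disjoint vertex sets such that $(S,T)$ realizes $\mu(G)$. Then $|S|\ge\delta(G)-1$, and if $|S|=\delta(G)-1$ then $\mu(G)=\delta(G)-1$.
   Context: All graphs are finite and simple; $\delta(G)$ is the minimum degree. For a graph $G=(V,E)$ on $n$ vertices, a fractional vertex cover is a function $f:V\to[0,\infty)$ with $f(u)+f(v)\ge 1$ for every edge $uv\in E$; $\tau^*(G)$ denotes the minimum of $\sum_{v\in V}f(v)$ over all fractional vertex covers. For $E'\subseteq E$ let $G-E'=(V,E\setminus E')$, and $\mu(G)=\min\{|E'| : E'\subseteq E,\ \tau^*(G-E')<n/2\}$. For disjoint $S,T\subseteq V$, $E_G(S;V\setminus T)$ is the set of edges with both endpoints in $S$ or with one endpoint in $S$ and the other in $V\setminus(S\cup T)$. It holds that $\mu(G)=\min|E_G(S;V\setminus T)|$ over disjoint $S,T$ with $|S|>|T|$; a pair $(S,T)$ of disjoint subsets with $|S|>|T|$ and $|E_G(S;V\setminus T)|=\mu(G)$ is said to realize $\mu(G)$. *)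

From HB Require Import structures.
From mathcomp Require Import all_boot all_order all_algebra.
From mathcomp Require Import reals.
Set Implicit Arguments. Unset Strict Implicit. Unset Printing Implicit Defensive.
Import Order.TTheory GRing.Theory Num.Theory.

(* A finite simple graph: vertex set T (a finType), adjacency e : rel T,
   assumed symmetric and irreflexive in the theorem. Edges are 2-element sets. *)
Section Graph.
Variables (T : finType) (e : rel T).

Definition edges : {set {set T}} :=
  [set [set x; y] | x in T, y in T & e x y].

Definition deg (x : T) : nat := #|[set y | e x y]|.

(* minimum degree delta(G) (graph assumed nonempty where used) *)
Definition mindeg : nat := \big[minn/#|T|]_(x : T) deg x.

Definition frac_cover (R : realType) (E' : {set {set T}}) (f : T -> R) : Prop :=
  (forall x, 0 <= f x)%R /\
  (forall x y, e x y -> [set x; y] \notin E' -> (1 <= f x + f y)%R).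

(* tau*(G - E') < n/2 : the minimum of sum f over fractional covers is < n/2,
   i.e. some fractional vertex cover of G - E' has total weight < n/2. *)
Definition tau_star_lt_half (R : realType) (E' : {set {set T}}) : Prop :=
  exists f : T -> R, frac_cover E' f /\
    (\sum_(v : T) f v < (#|T|%:R / 2%:R))%R.

Definition is_mu (R : realType) (k : nat) : Prop :=
  (exists E' : {set {set T}}, E' \subset edges /\ #|E'| = k /\ tau_star_lt_half R E')
  /\ (forall E' : {set {set T}}, E' \subset edges -> tau_star_lt_half R E' -> k <= #|E'|).

(* E_G(S; V \ T'): edges with both ends in S, or one end in S and the other
   outside S u T'. *)
Definition E_SVT (S T' : {set T}) : {set {set T}} :=
  [set ed in edges | [exists x, exists y,
     [&& ed == [set x; y], e x y &
        ((x \in S) && (y \in S)) || ((x \in S) && (y \notin S :|: T'))]]].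

Definition realizes (k : nat) (S T' : {set T}) : Prop :=
  [disjoint S & T'] /\ #|T'| < #|S| /\ #|E_SVT S T'| = k.

End Graph.

From HB Require Import structures.
From mathcomp Require Import all_boot all_order all_algebra.
From mathcomp Require Import reals.
From mathcomp Require Import zify.

Set Implicit Arguments.
Unset Strict Implicit.
Unset Printing Implicit Defensive.

(* Double counting.  For x in S put load x = |N(x) ∩ S| + 2 |N(x) \ (S ∪ T)|.
   Summing the loads over S counts each edge of E_G(S; V\T) with total weight
   at most 2 (an edge inside S once from each end, an edge leaving S ∪ T once
   with weight 2), so the loads add up to at most 2μ.  As deg x ≥ δ, and at
   most |T| neighbours of x lie in T and at most |S| - 1 in S, every load is at
   least both δ - |T| and 2(δ - |T|) - (|S| - 1).  With |T| < |S| and μ ≤ δ - 1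
   this arithmetic forces |S| ≥ δ - 1, and μ = δ - 1 when |S| = δ - 1. *)

Lemma set2_eq_pair (T : finType) (a b x y : T) :
  x != y -> [set x; y] = [set a; b] -> (x, y) = (a, b) \/ (x, y) = (b, a).
Proof.
move=> + eq_xy_ab.
have := set21 x y; have := set22 x y; rewrite eq_xy_ab.
by case/set2P=> ->; case/set2P=> ->; rewrite ?eqxx; auto.
Qed.

Lemma mindeg_le_deg (T : finType) (e : rel T) x : mindeg e <= deg e x.
Proof. exact: (@Order.TotalTheory.bigmin_le _ nat T #|T| x (deg e)). Qed.

Section RealizingPair.
Variables (T : finType) (e : rel T).
Hypothesis e_irr : irreflexive e.
Variables S T' : {set T}.

Definition nbhd x := [set y | e x y].

Definition load x := #|nbhd x :&: S| + 2 * #|nbhd x :\: (S :|: T')|.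

Lemma deg_le_split x :
  deg e x <= #|nbhd x :&: S| + #|nbhd x :\: (S :|: T')| + #|T'|.
Proof.
rewrite -addnA -[deg e x](cardsID S (nbhd x)) leq_add2l.
apply: leq_trans (leq_card_setU _ _); apply/subset_leq_card/subsetP => y.
by rewrite !inE; case: (y \in S); case: (y \in T'); case: (e x y).
Qed.

Lemma inner_deg_lt x : x \in S -> #|nbhd x :&: S| < #|S|.
Proof.
move=> xS; apply/proper_card; rewrite properE subsetIr /=.
by apply/subsetPn; exists x; rewrite ?inE ?e_irr.
Qed.

Lemma load_ge x : x \in S ->
  mindeg e - #|T'| <= load x /\ 2 * (mindeg e - #|T'|) - (#|S| - 1) <= load x.
Proof.
move=> xS; have := mindeg_le_deg e x; have := deg_le_split x.
have := inner_deg_lt xS; rewrite /load; lia.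
Qed.

Hypothesis ST'_disjoint : [disjoint S & T'].

Definition admissible (p : T * T) := [&& p.1 \in S, e p.1 p.2 & p.2 \notin T'].

Definition weight (p : T * T) := if p.2 \in S then 1 else 2.

Lemma admissible_edge p : admissible p -> [set p.1; p.2] \in E_SVT e S T'.
Proof.
case: p => a b /and3P[aS eab bT'] /=.
rewrite inE; apply/andP; split; first by apply/imset2P; exists a b; rewrite ?inE.
apply/existsP; exists a; apply/existsP; exists b.
by rewrite eqxx eab aS !inE (negbTE bT') orbF /=; case: (b \in S).
Qed.

Lemma fiber_weight_le2 ed :
  \sum_(p | admissible p && ([set p.1; p.2] == ed)) weight p <= 2.
Proof.
case: (pickP (fun p => admissible p && ([set p.1; p.2] == ed))); last first.
  by move=> no_fiber; rewrite big_pred0.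
move=> [a b] /andP[/[dup] adm_ab /and3P[aS eab _] /eqP /= <-].
have fiber q : admissible q && ([set q.1; q.2] == [set a; b]) ->
    q = (a, b) \/ q = (b, a) /\ b \in S.
  case: q => x y /andP[/and3P[/= xS exy _] /eqP /= eq_xy_ab].
  have neq_xy : x != y by apply: contraTneq exy => ->; rewrite e_irr.
  case: (set2_eq_pair neq_xy eq_xy_ab) => [|[x_b y_a]]; first by left.
  by right; rewrite -x_b y_a.
case bS: (b \in S).
- rewrite (eq_bigr (fun=> 1)); last first.
    by move=> q /fiber[|[]] ->; rewrite /weight /= ?aS ?bS.
  rewrite sum1_card.
  apply: (@leq_trans #|[set (a, b); (b, a)]|); last by rewrite cards2; case: eqP.
  by apply/subset_leq_card/subsetP => q /fiber[|[]] ->; rewrite !inE eqxx ?orbT.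
- rewrite (big_pred1 (a, b)) /weight /= ?bS // => q.
  apply/idP/eqP => [/fiber[|[_]]//|->]; first by rewrite bS.
  by rewrite adm_ab eqxx.
Qed.

Lemma admissible_weight_le :
  \sum_(p | admissible p) weight p <= 2 * #|E_SVT e S T'|.
Proof.
rewrite (partition_big _ _ admissible_edge) mulnC -sum_nat_const.
by apply: leq_sum => ed _; apply: fiber_weight_le2.
Qed.

Lemma load_weight x :
  x \in S -> \sum_(y | admissible (x, y)) weight (x, y) = load x.
Proof.
move=> xS; rewrite /load (bigID (mem S)) /= -sum1_card mulnC -sum_nat_const.
congr (_ + _); apply: eq_big => y; rewrite /admissible /weight /= xS.
- rewrite !inE; case yS: (y \in S); rewrite ?andbF //.
  by rewrite (disjointFr ST'_disjoint yS); case: (e x y).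
- by case/andP=> _ ->.
- by rewrite !inE; case: (e x y); case: (y \in S); case: (y \in T').
- by case/andP=> _ /negbTE ->.
Qed.

Lemma sum_load_le : \sum_(x in S) load x <= 2 * #|E_SVT e S T'|.
Proof.
rewrite -(eq_bigr _ load_weight) pair_big_dep.
apply: leq_trans admissible_weight_le; apply: eq_leq.
by apply: eq_big => [[a b]|[a b]] //=; rewrite /admissible /=; case: (a \in S).
Qed.

Lemma card_mul_le_E_SVT c :
  (forall x, x \in S -> c <= load x) -> #|S| * c <= 2 * #|E_SVT e S T'|.
Proof.
move=> c_le_load; rewrite -sum_nat_const.
by apply: leq_trans sum_load_le; apply: leq_sum.
Qed.

End RealizingPair.

Lemma arith_size_bound (s t d m : nat) :
  t < s -> m <= d - 1 ->
  s * (d - t) <= 2 * m -> s * (2 * (d - t) - (s - 1)) <= 2 * m ->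
  d - 1 <= s /\ (s = d - 1 -> m = d - 1).
Proof.
move=> t_lt_s m_le load_ge1 load_ge2.
have ge_s : d - 1 <= s by nia.
by split=> // s_eq; nia.
Qed.

Theorem lemma24 (R : realType) (T : finType) (e : rel T)
  (e_sym : symmetric e) (e_irr : irreflexive e)
  (mu : nat) (Hmu : is_mu e R mu)
  (Hdelta : 2 <= mindeg e) (Hmu_le : mu <= mindeg e - 1)
  (S T' : {set T}) (Hreal : realizes e mu S T') :
  mindeg e - 1 <= #|S| /\ (#|S| = mindeg e - 1 -> mu = mindeg e - 1).
Proof.
case: Hreal => ST'_disjoint [T'_lt_S card_E].
have load_bound c : (forall x, x \in S -> c <= load e S T' x) -> #|S| * c <= 2 * mu.
  by rewrite -card_E; apply: card_mul_le_E_SVT.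
apply: arith_size_bound T'_lt_S Hmu_le _ _;
  by apply: load_bound => x /(load_ge e_irr T')[].
Qed.
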